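(* Let $n\ge1$ and $0\le j\le n-1$. For every graph $G^*$ on $n$ vertices with at most one loop per vertex, \[\lambda_1(G^* )-\lambda_{n-j}(G^* )\le \frac n2\left(1+\sqrt{\frac{j+2}{j+1}}\right).\] Consequently, $s_{0,j}\le \frac12\left(1+\sqrt{\frac{j+2}{j+1}}\right)$.
   Context: A graph with at most one loop per vertex on vertex set $\{1,\dots,n\}$ is identified with its adjacency matrix $A=(a_{uv})$, a symmetric $n\times n$ $(0,1)$-matrix where $a_{uv}=1$ iff $uv$ is an edge and $a_{uu}=1$ iff there is a loop at $u$. Its eigenvalues (of $A$) are listed as $\lambda_1\ge\cdots\ge\lambda_n$. For a simple graph $G$ on $n$ vertices, ${\rm spread}_{i,j}(G)=\lambda_{i+1}(G)-\lambda_{n-j}(G)$; ${\rm spread}_{i,j}(n)$ is the maximum of ${\rm spread}_{i,j}(G)$ over all simple graphs $G$ on $n$ vertices, and $s_{i,j}=\lim_{n\to\infty}{\rm spread}_{i,j}(n)/n$ (this limit is known to exist). *)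

From HB Require Import structures.
From mathcomp Require Import all_boot all_order all_algebra.
From mathcomp Require Import all_classical all_reals all_analysis.
Set Implicit Arguments. Unset Strict Implicit. Unset Printing Implicit Defensive.
Import Order.TTheory GRing.Theory Num.Theory.
Local Open Scope ring_scope.

(* A graph on vertex set 'I_n (= {1..n} shifted) with at most one loop per
   vertex is identified with its adjacency matrix: a symmetric boolean matrix;
   G i i = true means a loop at i. *)
Definition loopy_graph (n : nat) (G : 'M[bool]_n) : bool := G^T == G.

Definition simple_graph (n : nat) (G : 'M[bool]_n) : bool :=
  (G^T == G) && [forall i, ~~ G i i].

Definition adj_mx (R : realType) (n : nat) (G : 'M[bool]_n) : 'M[R]_n :=
  map_mx (fun b : bool => (b : nat)%:R) G.

Definition is_spectrum (R : realType) (n : nat) (A : 'M[R]_n) (s : seq R) : Prop :=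
  [/\ size s = n, sorted (fun x y => y <= x) s &
      char_poly A = \prod_(x <- s) ('X - x%:P)].

Definition eigvals (R : realType) (n : nat) (A : 'M[R]_n) : seq R :=
  xget [::] (is_spectrum A).

(* lambda_k(A), 1-indexed: lambda_k = (eigvals A)`_(k-1). *)
Definition lambda (R : realType) (n : nat) (A : 'M[R]_n) (k : nat) : R :=
  (eigvals A)`_(k.-1).

Definition spread_graph (R : realType) (i j n : nat) (G : 'M[bool]_n) : R :=
  lambda (adj_mx R G) i.+1 - lambda (adj_mx R G) (n - j).

(* The
   set of simple graphs is nonempty (edgeless graph) and each spread_{i,j}(G)
   with i <= n-1-j is >= 0, so folding Num.max from 0 gives the true maximum. *)
Definition spread_n (R : realType) (i j n : nat) : R :=
  \big[Num.max/0]_(G : 'M[bool]_n | simple_graph G) spread_graph R i j G.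

From HB Require Import structures.
From mathcomp Require Import all_boot all_order all_algebra.
From mathcomp Require Import all_classical all_reals all_analysis.
From mathcomp Require Import complex ring lra zify.
Set Implicit Arguments. Unset Strict Implicit. Unset Printing Implicit Defensive.
Import Order.TTheory GRing.Theory Num.Theory numFieldNormedType.Exports.
Local Open Scope classical_set_scope.
Local Open Scope ring_scope.

(** Let A be the (0,1) adjacency matrix, x = lambda_1 and y = max(-lambda_(n-j), 0).
   Since A is symmetric with entries in {0,1}, tr(A^2) equals the sum of the
   entries of A, which is the Rayleigh quotient of the all-ones vector times n,
   hence at most n x.  The eigenvalues lambda_(n-j), ..., lambda_n all have
   square at least y^2, so x^2 + (j+1) y^2 <= sum lambda_i^2 = tr(A^2) <= n x.
   Maximising x + y on this ellipse (Cauchy-Schwarz) gives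
   x + y <= n/2 (1 + sqrt((j+2)/(j+1))).  The spectral facts for real symmetric
   matrices are obtained from the complex spectral theorem for hermitian ones. *)
Lemma char_poly_conjmx (F : fieldType) n (P A : 'M[F]_n) :
  P \in unitmx -> char_poly (invmx P *m A *m P) = char_poly A.
Proof.
move=> Pu; rewrite /char_poly /char_poly_mx.
set Q := map_mx polyC P; set Qi := map_mx polyC (invmx P).
have QiQ : Qi *m Q = 1%:M by rewrite -map_mxM mulVmx // map_mx1.
have -> : 'X%:M - map_mx polyC (invmx P *m A *m P) = Qi *m ('X%:M - map_mx polyC A) *m Q.
  by rewrite !map_mxM mulmxBr mulmxBl mul_mx_scalar -scalemxAl QiQ scalemx1.
rewrite !det_mulmx mulrC mulrA -det_mulmx.
by rewrite -[Q *m Qi]map_mxM mulmxV // map_mx1 det1 mul1r.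
Qed.

Section HermitianSpectrum.
Local Open Scope sesquilinear_scope.
Variables (C : numClosedFieldType) (n : nat) (B : 'M[C]_n) (s : seq C).
Hypotheses (hermB : B \is hermsymmx)
  (charB : char_poly B = \prod_(x <- s) ('X - x%:P)).

Let P := spectralmx B.
Let d := spectral_diag B.

Let B_spectral : B = P^t* *m diag_mx d *m P.
Proof.
have /orthomx_spectralP -> := hermitian_normalmx hermB.
by rewrite (invmx_unitary (spectral_unitarymx B)).
Qed.

Let PPt : P *m P^t* = 1%:M.
Proof. by apply/unitarymxP; exact: spectral_unitarymx. Qed.

Let PtP : P^t* *m P = 1%:M.
Proof. by rewrite -(invmx_unitary (spectral_unitarymx B)) mulVmx ?spectral_unit. Qed.

Let s_spectral_diag : perm_eq s [seq d 0 i | i <- enum 'I_n].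
Proof.
apply: prod_XsubC_eq; rewrite -charB.
have /orthomx_spectralP -> := hermitian_normalmx hermB.
rewrite char_poly_conjmx ?spectral_unit // char_poly_trig ?diag_mx_is_trig //.
by rewrite big_map big_enum; apply: eq_bigr => i _; rewrite mxE eqxx mulr1n.
Qed.

Lemma hermmx_mxtrace_sqr : \tr (B *m B) = \sum_(x <- s) x ^+ 2.
Proof.
rewrite B_spectral !mulmxA -[P^t* *m diag_mx d *m P *m P^t*]mulmxA PPt mulmx1.
rewrite mxtrace_mulC !mulmxA PPt mul1mx.
rewrite (perm_big _ s_spectral_diag) big_map big_enum /= mulmx_diag mxtrace_diag.
by apply: eq_bigr => i _; rewrite mxE expr2.
Qed.

Lemma hermmx_form_le (m : C) : {in s, forall x, x <= m} ->
  forall v : 'rV_n, (v *m B *m v^t*) 0 0 <= m * (v *m v^t*) 0 0.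
Proof.
move=> sm v; set u := P *m v^t*.
have vPt : v *m P^t* = u^t* by rewrite /u trmx_mul map_mxM trmxCK.
have -> : v *m B *m v^t* = u^t* *m diag_mx d *m u.
  by rewrite B_spectral !mulmxA vPt -!mulmxA.
have -> : v *m v^t* = u^t* *m u.
  by rewrite -vPt /u -mulmxA [P^t* *m _]mulmxA PtP mul1mx.
rewrite mul_mx_diag !mxE big_distrr /=; apply: ler_sum => i _.
rewrite !mxE mulrAC mulrC; apply: ler_wpM2r; first by rewrite mulrC mul_conjC_ge0.
by apply: sm; rewrite (perm_mem s_spectral_diag) map_f ?mem_enum.
Qed.

End HermitianSpectrum.

Section SymmetricSpectrum.
Local Open Scope sesquilinear_scope.
Variables (R : rcfType) (n : nat) (A : 'M[R]_n) (s : seq R).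
Hypotheses (symA : A^T = A) (charA : char_poly A = \prod_(x <- s) ('X - x%:P)).

Let f : {rmorphism R -> R[i]} := real_complex R.

Let map_f_conjT p q (M : 'M[R]_(p, q)) : (map_mx f M)^t* = map_mx f M^T.
Proof.
apply/matrixP => i k; rewrite !mxE; apply: conj_Creal.
by rewrite realE ler0c lecR le_total.
Qed.

Let herm_map_f : map_mx f A \is hermsymmx.
Proof. by rewrite qualifE /= expr0 scale1r map_f_conjT symA. Qed.

Let char_map_f : char_poly (map_mx f A) = \prod_(x <- map f s) ('X - x%:P).
Proof.
rewrite -map_char_poly charA rmorph_prod big_map.
by apply: eq_bigr => x _; exact: map_polyXsubC.
Qed.

Lemma sym_mxtrace_sqr : \tr (A *m A) = \sum_(x <- s) x ^+ 2.
Proof.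
apply: (@complexI R).
have trf M : \tr (map_mx f M) = f (\tr M).
  by rewrite /mxtrace rmorph_sum; apply: eq_bigr => i _; rewrite mxE.
rewrite -/f -trf map_mxM (hermmx_mxtrace_sqr herm_map_f char_map_f).
by rewrite big_map rmorph_sum; apply: eq_bigr => x _; rewrite rmorphXn.
Qed.

Lemma sym_form_le (m : R) : {in s, forall x, x <= m} ->
  forall v : 'rV_n, (v *m A *m v^T) 0 0 <= m * (v *m v^T) 0 0.
Proof.
move=> sm v; have := hermmx_form_le herm_map_f char_map_f (m := f m) _ (map_mx f v).
rewrite map_f_conjT -!map_mxM ![map_mx f _ 0 0]mxE -rmorphM lecR; apply.
by move=> _ /mapP[x sx ->]; rewrite lecR sm.
Qed.

End SymmetricSpectrum.

Lemma ellipse_add_le (R : rcfType) (N m x y t : R) :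
  0 <= N -> 0 < m -> 0 <= t -> t ^+ 2 * m = m + 1 -> 0 <= y ->
  x ^+ 2 + m * y ^+ 2 <= N * x -> x + y <= N / 2 * (1 + t).
Proof.
move=> N0 m0 t0 tm y0 xy.
set a := x - N / 2; set T := t * N / 2.
have a_ell : a ^+ 2 + m * y ^+ 2 <= N ^+ 2 / 4 by rewrite /a; nra.
(* Cauchy--Schwarz for the weights (1, m) and (1, 1/m). *)
have CS : m * (a + y) ^+ 2 <= (m + 1) * (a ^+ 2 + m * y ^+ 2).
  have : 0 <= (a - m * y) ^+ 2 by exact: sqr_ge0.
  nra.
have : (a + y) ^+ 2 <= T ^+ 2.
  rewrite -(ler_pM2l m0); apply: (le_trans CS).
  have -> : m * T ^+ 2 = (m + 1) * (N ^+ 2 / 4) by rewrite -tm /T; field.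
  by rewrite ler_pM2l //; lra.
have T0 : 0 <= T by rewrite /T; apply: divr_ge0 => //; apply: mulr_ge0.
rewrite -ler_sqrt ?sqr_ge0 // !sqrtr_sqr (ger0_norm T0) => ay_le.
have -> : N / 2 * (1 + t) = N / 2 + T by rewrite /T; field.
by move: ay_le (ler_norm (a + y)); rewrite /a; lra.
Qed.

Lemma sorted_ge_nth (R : numDomainType) (s : seq R) (i k : nat) :
  sorted (fun x y => y <= x) s -> (i <= k < size s)%N -> s`_k <= s`_i.
Proof.
move=> srt /andP[ik ks].
have ge_trans : transitive (fun x y : R => y <= x) by move=> ? ? ? /[swap]; exact: le_trans.
apply: (sorted_leq_nth ge_trans lexx 0 srt) => //; rewrite inE //.
exact: leq_ltn_trans ks.
Qed.

Lemma sorted_ge_head (R : numDomainType) (s : seq R) :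
  sorted (fun x y => y <= x) s -> {in s, forall x, x <= s`_0}.
Proof. by move=> srt _ /(nthP 0)[i ilt <-]; apply: sorted_ge_nth. Qed.

Lemma sqrt_ratio_sqr (R : rcfType) (j : nat) :
  Num.sqrt (j.+2%:R / j.+1%:R) ^+ 2 * j.+1%:R = j.+1%:R + 1 :> R.
Proof.
rewrite sqr_sqrtr; last by apply: divr_ge0.
by rewrite divfK ?pnatr_eq0 // -[j.+2]addn1 natrD.
Qed.

Lemma spread_le_of_sum_sqr_le (R : rcfType) (n j : nat) (s : seq R) :
  size s = n -> sorted (fun x y => y <= x) s -> (j < n)%N ->
  \sum_(x <- s) x ^+ 2 <= n%:R * s`_0 ->
  s`_0 - s`_(n - j).-1 <= n%:R / 2 * (1 + Num.sqrt (j.+2%:R / j.+1%:R)).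
Proof.
move=> sz srt jn sum_le; set t := Num.sqrt _; set p := (n - j).-1.
have t_ge0 : 0 <= t := sqrtr_ge0 _.
have [-> | p_gt0] := posnP p.
  by rewrite subrr; apply: mulr_ge0; [apply: divr_ge0 | lra].
(* Only the negative part of s_p matters; it is dominated in absolute value
   by each of the last j + 1 entries s_p, ..., s_(n-1). *)
set y := Num.max (- s`_p) 0.
have y_ge0 : 0 <= y by rewrite le_max lexx orbT.
have tail i : (p <= i < n)%N -> y ^+ 2 <= s`_i ^+ 2.
  move=> /andP[pi ilt].
  have : s`_i <= s`_p by by apply: sorted_ge_nth; rewrite // pi sz.
  move=> si_le; have y_le : y <= `|s`_i|.
    rewrite ge_max normr_ge0 andbT -normrN (le_trans _ (ler_norm _)) //.
    by rewrite lerN2.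
  by rewrite -(real_normK (num_real s`_i)) lerXn2r ?nnegrE.
have split_sum : s`_0 ^+ 2 + j.+1%:R * y ^+ 2 <= \sum_(x <- s) x ^+ 2.
  rewrite (big_nth 0) sz (@big_cat_nat _ _ _ p) //=; last by rewrite /p; lia.
  rewrite big_ltn // lerD //.
    by rewrite lerDl sumr_ge0 // => i _; apply: sqr_ge0.
  have -> : j.+1%:R * y ^+ 2 = \sum_(p <= i < n) y ^+ 2.
    by rewrite sumr_const_nat mulr_natl; congr (_ *+ _); rewrite /p; lia.
  exact: ler_sum_nat.
have := ellipse_add_le (ler0n _ n) (ltr0Sn _ j) t_ge0 (sqrt_ratio_sqr R j) y_ge0
  (le_trans split_sum sum_le).
have : - s`_p <= y by rewrite le_max lexx.
lra.
Qed.

Lemma form_const1_mx (R : comPzRingType) n (A : 'M[R]_n) :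
  ((const_mx 1 : 'rV_n) *m A *m (const_mx 1 : 'rV_n)^T) 0 0 = \sum_i \sum_k A i k.
Proof.
rewrite mxE; under eq_bigr => k _ do rewrite !mxE mulr1.
rewrite exchange_big; apply: eq_bigr => i _; apply: eq_bigr => k _.
by rewrite mxE mul1r.
Qed.

Lemma dotmx_const1 (R : pzSemiRingType) n :
  ((const_mx 1 : 'rV[R]_n) *m (const_mx 1 : 'rV_n)^T) 0 0 = n%:R.
Proof.
rewrite mxE; under eq_bigr => k _ do rewrite !mxE mulr1.
by rewrite sumr_const card_ord.
Qed.

Section AdjacencyMatrix.
Variables (R : realType) (n : nat) (G : 'M[bool]_n).
Hypothesis symG : loopy_graph G.

Let A := adj_mx R G.

Lemma adj_mx_sym : A^T = A.
Proof. by move/eqP: symG => GT; apply/matrixP => i k; rewrite !mxE -[in RHS]GT mxE. Qed.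

(* The entries of A are idempotent. *)
Lemma mxtrace_adj_sqr : \tr (A *m A) = \sum_i \sum_k A i k.
Proof.
apply: eq_bigr => i _; rewrite mxE; apply: eq_bigr => k _.
have -> : A k i = A i k by rewrite -{1}adj_mx_sym mxE.
by rewrite /A /adj_mx mxE; case: (G i k); rewrite ?mul1r ?mul0r.
Qed.

Lemma adj_sum_sqr_le (s : seq R) : is_spectrum A s ->
  \sum_(x <- s) x ^+ 2 <= n%:R * s`_0.
Proof.
case=> _ srt charA.
rewrite -(sym_mxtrace_sqr adj_mx_sym charA) mxtrace_adj_sqr -form_const1_mx.
rewrite mulrC -(dotmx_const1 R n).
exact: sym_form_le adj_mx_sym charA _ (sorted_ge_head srt) _.
Qed.

Lemma adj_spread_le (j : nat) : (1 <= n)%N -> (j <= n - 1)%N ->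
  lambda A 1 - lambda A (n - j)
    <= n%:R / 2 * (1 + Num.sqrt (j.+2%:R / j.+1%:R)).
Proof.
move=> n_gt0 jn; rewrite /lambda /eigvals.
have [[s As] | noA] := pselect (exists s, is_spectrum A s); last first.
  (* without a spectrum, [xget] returns [::] and both eigenvalues are 0 *)
  rewrite xgetPN; last by move=> s As; apply: noA; exists s.
  by rewrite !nth_nil subrr mulr_ge0 ?divr_ge0 ?addr_ge0 ?sqrtr_ge0.
have spec := xgetPex [::] (ex_intro _ s As).
case: (spec) => sz srt _.
apply: spread_le_of_sum_sqr_le => //; first lia.
exact: adj_sum_sqr_le.
Qed.

End AdjacencyMatrix.

Lemma spread_n_le (R : realType) (j n : nat) : (j < n)%N ->
  spread_n R 0 j n <= n%:R * (2^-1 * (1 + Num.sqrt (j.+2%:R / j.+1%:R))).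
Proof.
move=> jn; apply: bigmax_le => [|G /andP[symG _]].
  by rewrite !mulr_ge0 ?invr_ge0 ?addr_ge0 ?sqrtr_ge0.
rewrite mulrA; apply: adj_spread_le => //; lia.
Qed.

Theorem theorem1p2 (R : realType) (j : nat) :
  (forall (n : nat) (G : 'M[bool]_n), (1 <= n)%N -> (j <= n - 1)%N ->
     loopy_graph G ->
     lambda (adj_mx R G) 1 - lambda (adj_mx R G) (n - j)
       <= n%:R / 2 * (1 + Num.sqrt (j.+2%:R / j.+1%:R)))
  /\
  (forall l : R,
     (fun n : nat => spread_n R 0 j n / n%:R) @ \oo --> l ->
     l <= 2^-1 * (1 + Num.sqrt (j.+2%:R / j.+1%:R))).
Proof.
split=> [n G n_gt0 jn symG | l spread_cvg]; first exact: adj_spread_le.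
apply: (cvgr_to_le spread_cvg); exists j.+1 => // n /= jn.
by rewrite ler_pdivrMr ?ltr0n 1?mulrC ?spread_n_le //; lia.
Qed.
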